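(* Let $\|\cdot\|_W$ be the wedge norm on $\mathbb{R}^p$, with allowed sets $S=\{1,\dots,s\}$, $s\in\{1,\dots,p-1\}$, and associated norms $\Omega^{S^c}$ as in the context. Fix $J\subset\{1,\dots,p\}$ and let $g$ be the gauge norm described in the context. Then $g(\beta)=\|\beta\|_1$ for all $\beta\in\mathbb{R}^p$.
   Context: Let $\mathcal{A}:=\{a\in\mathbb{R}^p: a_j>0 \ \forall j,\ a_1\ge a_2\ge\dots\ge a_p\}$ and $\|\beta\|_W:=\inf_{a\in\mathcal{A}}\frac12\sum_{j=1}^p\big(\beta_j^2/a_j+a_j\big)$. For $S=\{1,\dots,s\}$ let $\mathcal{A}_{S^c}:=\{(a_j)_{j\in S^c}:a\in\mathcal{A}\}$ and $\Omega^{S^c}(\beta_{S^c}):=\inf_{a\in\mathcal{A}_{S^c}}\frac12\sum_{j\in S^c}\big(\beta_j^2/a_j+a_j\big)$; then $\|\beta_S\|_W+\Omega^{S^c}(\beta_{S^c})\le\|\beta\|_W$ for all $\beta$, and $\Upsilon_S(\beta):=\|\beta_S\|_W+\Omega^{S^c}(\beta_{S^c})$. Here $\beta_S$ has entries $\beta_j1\{j\in S\}$. Let $\beta_{f(J)}:=\beta_J-\beta_{J^{c}}$, $\mathrm{flip}_J(B):=\{\beta_{f(J)}:\beta\in B\}$, $\overline{B}:=\bigcup_{S\text{ allowed}}\{\beta:\Upsilon_S(\beta)\le1\}$, $B_g:=\mathrm{Conv}(\overline{B}\cup\mathrm{flip}_J(\overline{B}))$, and $g(x):=\inf\{t>0:x\in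 tB_g\}$. *)

From HB Require Import structures.
From mathcomp Require Import all_boot all_order all_algebra.
From mathcomp Require Import all_classical all_reals.
Set Implicit Arguments. Unset Strict Implicit. Unset Printing Implicit Defensive.
Import Order.TTheory GRing.Theory Num.Theory.
Local Open Scope classical_set_scope.
Local Open Scope ring_scope.

Section Wedge.
Variables (R : realType) (p : nat).

(* Vectors in R^p are row vectors 'rV[R]_p; coordinate j (0-based) is b 0 j. *)

Definition wedge_cone (a : 'I_p -> R) : Prop :=
  (forall j, 0 < a j) /\ (forall i j : 'I_p, (i <= j)%N -> a j <= a i).

Definition wedge_norm (b : 'rV[R]_p) : R :=
  inf [set (2^-1 * \sum_(j < p) (b 0 j ^+ 2 / a j + a j)) | a in wedge_cone].

(* S = {1,...,s}, i.e. 0-based indices j < s *)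
Definition restrS (s : nat) (b : 'rV[R]_p) : 'rV[R]_p :=
  \row_j (if (j < s)%N then b 0 j else 0).

(* Omega^{S^c}(b_{S^c}) = inf over a in A_{S^c} (restrictions of a in A to S^c) *)
Definition OmegaSc (s : nat) (b : 'rV[R]_p) : R :=
  inf [set (2^-1 * \sum_(j < p | (s <= j)%N) (b 0 j ^+ 2 / a j + a j)) | a in wedge_cone].

(* Upsilon_S(b) = ||b_S||_W + Omega^{S^c}(b_{S^c}); OmegaSc only reads
   the coordinates j >= s, i.e. b_{S^c}. *)
Definition UpsS (s : nat) (b : 'rV[R]_p) : R :=
  wedge_norm (restrS s b) + OmegaSc s b.

(* allowed S = {1..s}, s in {1,...,p-1} *)
Definition Bbar : set 'rV[R]_p :=
  [set b | exists s : nat, [/\ (0 < s)%N, (s < p)%N & UpsS s b <= 1]].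

Definition flipJ (J : {set 'I_p}) (b : 'rV[R]_p) : 'rV[R]_p :=
  \row_j (if j \in J then b 0 j else - b 0 j).

Definition conv_hull (A : set 'rV[R]_p) : set 'rV[R]_p :=
  [set x | exists (n : nat) (w : 'I_n -> R) (y : 'I_n -> 'rV[R]_p),
     [/\ (forall i, 0 <= w i), \sum_(i < n) w i = 1, (forall i, A (y i))
       & x = \sum_(i < n) w i *: y i]].

Definition Bg (J : {set 'I_p}) : set 'rV[R]_p :=
  conv_hull (Bbar `|` (flipJ J @` Bbar)).

Definition gauge_g (J : {set 'I_p}) (x : 'rV[R]_p) : R :=
  inf [set t : R | 0 < t /\ exists2 b, Bg J b & x = t *: b].

End Wedge.

From HB Require Import structures.
From mathcomp Require Import all_boot all_order all_algebra.
From mathcomp Require Import all_classical all_reals.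
From mathcomp Require Import ring lra.
Set Implicit Arguments. Unset Strict Implicit. Unset Printing Implicit Defensive.
Import Order.TTheory GRing.Theory Num.Theory.
Local Open Scope classical_set_scope.
Local Open Scope ring_scope.

(** By AM-GM, [b^2/a + a >= 2|b|] for every weight [a > 0], so [||.||_W],
    [Omega^{S^c}] and hence every [Upsilon_S] dominate the l1 norm of the
    coordinates they see; the l1 norm is invariant under sign flips and convex,
    so [B_g] lies in the unit l1 ball.  Conversely every signed unit vector lies
    in [Bbar]: for [+-e_1] take [S = {1}] and weights [(1, eps, ..., eps)]; for
    [+-e_j], [j > 1], take [S = {1, ..., j-1}], the constant weights [eps] for
    [||.||_W] and weights [1] up to index [j] and [eps] after it for
    [Omega^{S^c}].  In both cases [Upsilon_S <= 1 + O(eps)].  Hence [B_g] is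
    the unit l1 ball, whose gauge is the l1 norm. *)

Lemma amgm_norm (R : realFieldType) (c a : R) : 0 < a -> 2 * `|c| <= c ^+ 2 / a + a.
Proof.
move=> a_gt0; have a_neq0 : a != 0 by rewrite gt_eqF.
rewrite -real_normK ?num_real //.
have -> : `|c| ^+ 2 / a + a = 2 * `|c| + (`|c| - a) ^+ 2 / a by field.
by rewrite lerDl divr_ge0 // ?sqr_ge0 ?ltW.
Qed.

Lemma sum_le_single_add (R : numDomainType) (I : finType) (P : pred I)
    (F : I -> R) (j : I) (c eps : R) :
  0 <= c -> 0 <= eps -> (P j -> F j <= c) ->
  (forall i, P i -> i != j -> F i <= eps) ->
  \sum_(i | P i) F i <= c + #|I|%:R * eps.
Proof.
move=> c_ge0 eps_ge0 Fj Fi.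
pose G i := (if i == j then c else 0) + eps.
have G_ge0 i : 0 <= G i by rewrite addr_ge0 //; case: eqP.
apply: (@le_trans _ _ (\sum_(i | P i) G i)).
  apply: ler_sum => i; rewrite /G; case: eqVneq => [->|ij] Pi.
    by rewrite ler_wpDr ?Fj.
  by rewrite add0r Fi.
have -> : c + #|I|%:R * eps = \sum_i G i.
  by rewrite big_split /= -big_mkcond big_pred1_eq sumr_const mulr_natl.
by rewrite [X in _ <= X](bigID P) /= lerDl sumr_ge0.
Qed.

Lemma le_of_forall_le_addr (R : realFieldType) (x y C : R) : 0 <= C ->
  (forall eps, 0 < eps -> eps <= 1 -> x <= y + C * eps) -> x <= y.
Proof.
move=> C_ge0 H; apply/ler_addgt0Pr => e e_gt0.
have C1_gt0 : 0 < C + 1 by rewrite ltr_wpDl.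
pose eps := Num.min 1 (e / (C + 1)).
have eps_gt0 : 0 < eps by rewrite lt_min ltr01 divr_gt0.
have eps_le1 : eps <= 1 by rewrite ge_min lexx.
have : eps <= e / (C + 1) by rewrite ge_min lexx orbT.
rewrite ler_pdivlMr // => Ceps; apply: (le_trans (H eps eps_gt0 eps_le1)).
by rewrite lerD2l; nra.
Qed.

Section WedgeBounds.
Variables (R : realType) (p : nat).
Implicit Types (b x y : 'rV[R]_p) (a : 'I_p -> R).

Definition wedge_term b a (j : 'I_p) := b 0 j ^+ 2 / a j + a j.

Definition wedge_inf (P : pred 'I_p) b :=
  inf [set 2^-1 * \sum_(j | P j) wedge_term b a j | a in @wedge_cone R p].

Lemma wedge_normE b : wedge_norm b = wedge_inf xpredT b.
Proof. by []. Qed.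

Lemma OmegaScE s b : OmegaSc s b = wedge_inf (fun j => s <= j)%N b.
Proof. by []. Qed.

Lemma wedge_term_ge0 b a j : 0 < a j -> 0 <= wedge_term b a j.
Proof. by move=> a_gt0; rewrite addr_ge0 ?divr_ge0 ?sqr_ge0 ?ltW. Qed.

Lemma wedge_term_eq0 b a j : b 0 j = 0 -> wedge_term b a j = a j.
Proof. by rewrite /wedge_term => ->; rewrite expr0n mul0r add0r. Qed.

Lemma l1_le_wedge_inf P b : \sum_(j | P j) `|b 0 j| <= wedge_inf P b.
Proof.
apply: lb_le_inf.
  by exists (2^-1 * \sum_(j | P j) wedge_term b (fun=> 1) j), (fun=> 1).
move=> _ [a [a_gt0 _] <-].
have : \sum_(j | P j) (2 * `|b 0 j|) <= \sum_(j | P j) wedge_term b a j.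
  by apply: ler_sum => j _; apply: amgm_norm.
rewrite -mulr_sumr; lra.
Qed.

Lemma wedge_inf_le P b a : wedge_cone a ->
  wedge_inf P b <= 2^-1 * \sum_(j | P j) wedge_term b a j.
Proof.
move=> a_cone; apply: ge_inf; last by exists a.
exists 0 => _ [a' [a'_gt0 _] <-].
by rewrite mulr_ge0 ?invr_ge0 ?sumr_ge0 // => j _; apply: wedge_term_ge0.
Qed.

Definition l1norm b := \sum_(j < p) `|b 0 j|.

Lemma l1norm_ge0 b : 0 <= l1norm b.
Proof. by rewrite sumr_ge0. Qed.

Lemma l1norm0 : l1norm 0 = 0.
Proof. by rewrite /l1norm big1 // => j _; rewrite mxE normr0. Qed.

Lemma l1normD x y : l1norm (x + y) <= l1norm x + l1norm y.
Proof. by rewrite /l1norm -big_split ler_sum // => j _; rewrite mxE ler_normD. Qed.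

Lemma l1normZ t b : l1norm (t *: b) = `|t| * l1norm b.
Proof. by rewrite /l1norm mulr_sumr; apply: eq_bigr => j _; rewrite mxE normrM. Qed.

Lemma l1norm_flipJ J b : l1norm (flipJ J b) = l1norm b.
Proof. by apply: eq_bigr => j _; rewrite mxE; case: ifP; rewrite ?normrN. Qed.

Lemma l1norm_le_UpsS s b : l1norm b <= UpsS s b.
Proof.
rewrite /l1norm /UpsS (bigID (fun j : 'I_p => (j < s)%N)) /=.
apply: lerD.
  apply: le_trans (l1_le_wedge_inf _ _); rewrite big_mkcond /=.
  by apply: ler_sum => j _; rewrite mxE; case: ifP; rewrite ?normr0.
by apply: le_trans (l1_le_wedge_inf _ _); under eq_bigl do rewrite -leqNgt.
Qed.

Lemma l1norm_conv_hull (A : set 'rV[R]_p) :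
  (forall y, A y -> l1norm y <= 1) -> forall x, conv_hull A x -> l1norm x <= 1.
Proof.
move=> A_le1 _ [n [w [y [w_ge0 w_sum1 Ay ->]]]].
apply: (@le_trans _ _ (\sum_(i < n) w i)); last by rewrite w_sum1.
elim/big_ind2: _ => [|x1 t1 x2 t2 le1 le2|i _]; first by rewrite l1norm0.
  by apply: le_trans (l1normD _ _) _; apply: lerD.
by rewrite l1normZ ger0_norm // ler_piMr ?A_le1.
Qed.

Lemma l1norm_Bbar y : Bbar y -> l1norm y <= 1.
Proof. by case=> s [_ _]; apply: le_trans; apply: l1norm_le_UpsS. Qed.

Lemma l1norm_Bg J x : Bg J x -> l1norm x <= 1.
Proof.
apply: l1norm_conv_hull => y [/l1norm_Bbar //|[z /l1norm_Bbar Bz <-]].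
by rewrite l1norm_flipJ.
Qed.

End WedgeBounds.

Section SignedUnitVectors.
Variables (R : realType) (p : nat).

Definition step_weight (j : 'I_p) (eps : R) (i : 'I_p) : R :=
  if (i <= j)%N then 1 else eps.

Lemma step_weight_cone (j : 'I_p) (eps : R) :
  0 < eps -> eps <= 1 -> wedge_cone (step_weight j eps).
Proof.
move=> eps_gt0 eps_le1; split => [i|i k ik]; rewrite /step_weight; first by case: ifP.
by case: (leqP k j) => [kj|_]; [rewrite (leq_trans ik kj) | case: ifP].
Qed.

Lemma step_weight_gt (j : 'I_p) (eps : R) (i : 'I_p) :
  (j < i)%N -> step_weight j eps i = eps.
Proof. by rewrite /step_weight ltnNge => /negbTE ->. Qed.

Variables (b : 'rV[R]_p) (j : 'I_p).
Hypotheses (b_j : b 0 j ^+ 2 = 1) (b_off : forall i, i != j -> b 0 i = 0).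

Lemma wedge_term_step_weight (eps : R) : wedge_term b (step_weight j eps) j = 2.
Proof. by rewrite /wedge_term /step_weight leqnn b_j divr1. Qed.

Lemma UpsS_head_le s (eps : R) :
  j = 0%N :> nat -> (0 < s)%N -> 0 < eps -> eps <= 1 -> UpsS s b <= 1 + (p%:R + 1) * eps.
Proof.
move=> j0 s_gt0 eps_gt0 eps_le1; pose a := step_weight j eps.
have a_off i : i != j -> a i = eps.
  by move=> ij; apply: step_weight_gt; rewrite j0 lt0n -j0 (inj_eq val_inj).
have b_restr : restrS s b = b.
  apply/rowP => i; rewrite mxE; case: (eqVneq i j) => [->|/b_off ->].
    by rewrite j0 s_gt0.
  by rewrite if_same.
have W : \sum_i wedge_term b a i <= 2 + p%:R * eps.
  rewrite -[X in X%:R * eps](card_ord p).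
  apply: (sum_le_single_add (j := j)) => //; first exact: ltW.
    by rewrite /a wedge_term_step_weight.
  by move=> i _ ij; rewrite wedge_term_eq0 ?b_off ?a_off.
have O : \sum_(i < p | (s <= i)%N) wedge_term b a i <= 0 + p%:R * eps.
  rewrite -[X in X%:R * eps](card_ord p).
  apply: (sum_le_single_add (j := j)) => //; first exact: ltW.
    by rewrite j0 leqNgt s_gt0.
  by move=> i _ ij; rewrite wedge_term_eq0 ?b_off ?a_off.
have a_cone : wedge_cone a := step_weight_cone j eps_gt0 eps_le1.
have := wedge_inf_le xpredT b a_cone; have := wedge_inf_le (fun i => s <= i)%N b a_cone.
rewrite /UpsS b_restr wedge_normE OmegaScE mulrDl mul1r.
have : 0 <= p%:R * eps by rewrite mulr_ge0 ?ler0n ?ltW.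
lra.
Qed.

Lemma UpsS_at_le (eps : R) : 0 < eps -> eps <= 1 ->
  UpsS j b <= 1 + (p%:R + 1) * eps.
Proof.
move=> eps_gt0 eps_le1; pose a := step_weight j eps.
have a_cone : wedge_cone a := step_weight_cone j eps_gt0 eps_le1.
have restr0 i : restrS j b 0 i = 0.
  by rewrite mxE; case: ltnP => // ij; rewrite b_off // neq_ltn ij.
have W : \sum_i wedge_term (restrS j b) (fun=> eps) i = p%:R * eps.
  under eq_bigr do rewrite wedge_term_eq0 //.
  by rewrite sumr_const card_ord mulr_natl.
have O : \sum_(i < p | (j <= i)%N) wedge_term b a i <= 2 + p%:R * eps.
  rewrite -[X in X%:R * eps](card_ord p).
  apply: (sum_le_single_add (j := j)) => //.
  - exact: ltW.
  - by rewrite /a wedge_term_step_weight.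
  move=> i ji ij; rewrite wedge_term_eq0 ?b_off // /a step_weight_gt //.
  by rewrite ltn_neqAle ji andbT eq_sym.
have const_cone : wedge_cone (fun _ : 'I_p => eps) by split.
have := wedge_inf_le xpredT (restrS j b) const_cone.
have := wedge_inf_le (fun i => j <= i)%N b a_cone.
rewrite /UpsS wedge_normE OmegaScE W mulrDl mul1r.
have : 0 <= p%:R * eps by rewrite mulr_ge0 ?ler0n ?ltW.
lra.
Qed.

Lemma Bbar_unit : (1 < p)%N -> Bbar b.
Proof.
move=> p_gt1; have C_ge0 : 0 <= p%:R + 1 :> R by rewrite addr_ge0 ?ler0n.
have [j0|j_gt0] := posnP j.
- exists 1%N; split => //; apply: (le_of_forall_le_addr C_ge0) => eps.
  exact: UpsS_head_le.
- exists j; split => //; apply: (le_of_forall_le_addr C_ge0) => eps.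
  exact: UpsS_at_le.
Qed.

End SignedUnitVectors.

Lemma Bbar_delta (R : realType) (p : nat) (j : 'I_p) : (1 < p)%N ->
  Bbar (delta_mx 0 j : 'rV[R]_p) /\ Bbar (- delta_mx 0 j : 'rV[R]_p).
Proof.
move=> p_gt1; split; apply: (@Bbar_unit _ _ _ j) => //.
- by rewrite mxE !eqxx expr1n.
- by move=> i /negbTE ij; rewrite mxE ij.
- by rewrite !mxE !eqxx sqrrN expr1n.
- by move=> i /negbTE ij; rewrite !mxE ij oppr0.
Qed.

Lemma l1_ball_sub_conv_hull (R : realType) (p : nat) (A : set 'rV[R]_p) :
  (0 < p)%N -> (forall j, A (delta_mx 0 j) /\ A (- delta_mx 0 j)) ->
  forall x, l1norm x <= 1 -> conv_hull A x.
Proof.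
move=> p_gt0 A_delta x x_le1.
have p_neq0 : (p%:R : R) != 0 by rewrite pnatr_eq0 -lt0n.
(* The slack [1 - |x|_1] is spread evenly over all [2p] vertices [+-e_j];
   it cancels in the combination, which only sees [w(e_j) - w(-e_j) = x_j]. *)
pose r := (1 - l1norm x) / (2 * p%:R).
have r_ge0 : 0 <= r by rewrite divr_ge0 ?subr_ge0 ?mulr_ge0 ?ler0n.
pose w (i : 'I_(p + p)) : R := match fintype.split i with
  | inl j => (`|x 0 j| + x 0 j) / 2 + r
  | inr j => (`|x 0 j| - x 0 j) / 2 + r end.
pose y (i : 'I_(p + p)) : 'rV[R]_p := match fintype.split i with
  | inl j => delta_mx 0 j
  | inr j => - delta_mx 0 j end.
have split_l (j : 'I_p) : fintype.split (lshift p j) = inl j := unsplitK (inl j).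
have split_r (j : 'I_p) : fintype.split (rshift p j) = inr j := unsplitK (inr j).
exists (p + p)%N, w, y; split.
- move=> i; rewrite /w; case: fintype.split => j;
    have := ler_norm (x 0 j); have := ler_norm (- x 0 j); rewrite normrN; lra.
- rewrite big_split_ord /= -big_split /=.
  rewrite (eq_bigr (fun j => `|x 0 j| + 2 * r)) => [|j _]; last first.
    by rewrite /w split_l split_r; field.
  rewrite big_split /= -/(l1norm x) sumr_const card_ord -mulr_natr /r.
  by field.
- by move=> i; rewrite /y; case: fintype.split => j; case: (A_delta j).
- rewrite big_split_ord /= -big_split /= {1}(row_sum_delta x).
  apply: eq_bigr => j _; rewrite /w /y split_l split_r scalerN -scalerBl.
  by congr (_ *: _); field.
Qed.

Lemma Bg_l1_ball (R : realType) (p : nat) (J : {set 'I_p}) : (1 < p)%N ->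
  Bg J = [set x : 'rV[R]_p | l1norm x <= 1].
Proof.
move=> p_gt1; apply/seteqP; split => x; first exact: l1norm_Bg.
apply: l1_ball_sub_conv_hull; first exact: ltnW.
by move=> j; have [Bd BNd] := Bbar_delta R j p_gt1; split; left.
Qed.

Section Gauge.
Variables (R : realType) (V : lmodType R) (N : V -> R).
Hypotheses (N_ge0 : forall x, 0 <= N x)
  (N_scale : forall t x, 0 < t -> N (t *: x) = t * N x).

Definition gauge (B : set V) (x : V) : R :=
  inf [set t : R | 0 < t /\ exists2 b, B b & x = t *: b].

Lemma gauge_unit_ball x : gauge [set b | N b <= 1] x = N x.
Proof.
have gauge_mem t : N x < t -> 0 < t /\ exists2 b, N b <= 1 & x = t *: b.
  move=> Nx_lt; have t_gt0 : 0 < t by apply: le_lt_trans Nx_lt.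
  split => //; exists (t^-1 *: x); last by rewrite scalerA mulfV ?gt_eqF // scale1r.
  by rewrite N_scale ?invr_gt0 // mulrC ler_pdivrMr // mul1r ltW.
apply/eqP; rewrite eq_le; apply/andP; split.
- apply/ler_addgt0Pr => e e_gt0; apply: ge_inf; last by apply: gauge_mem; rewrite ltrDl.
  by exists 0 => t [t_gt0 _]; apply: ltW.
- apply: lb_le_inf; first by exists (N x + 1); apply: gauge_mem; rewrite ltrDl.
  move=> t [t_gt0 [b Nb ->]]; rewrite N_scale //; exact: ler_piMr (ltW t_gt0) Nb.
Qed.

End Gauge.

Theorem lemma6 (R : realType) (p : nat) (hp : (1 < p)%N) (J : {set 'I_p})
  (b : 'rV[R]_p) :
  gauge_g J b = \sum_(j < p) `|b 0 j|.
Proof.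
have -> : gauge_g J b = gauge (Bg J) b by [].
rewrite Bg_l1_ball //; apply: gauge_unit_ball; first exact: l1norm_ge0.
by move=> t x t_gt0; rewrite l1normZ gtr0_norm.
Qed.
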